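(* Let $\mathbb{F}\in\{\mathbb{R},\mathbb{C}\}$, let $\boldsymbol A\in\mathbb{F}^{m\times n}$ with $m<n$, and let $k\in\{1,\dots,n\}$ be an integer. Suppose there exist a map $\Delta:\mathbb{R}^m\to\mathbb{F}^n$ and a constant $c_0>0$ such that \[ \mathrm{dist}(\Delta(|\boldsymbol A\boldsymbol x|),\boldsymbol x)\le c_0\,\sigma_k(\boldsymbol x)_2\qquad\text{for all }\boldsymbol x\in\mathbb{F}^n . \] Then $m\ge c\,n$ for a constant $c>0$ depending only on $c_0$.
   Context: $|\boldsymbol u|$ is the entrywise modulus. $\mathrm{dist}(\boldsymbol x,\boldsymbol y)=\min_{c\in\mathbb F,|c|=1}\|\boldsymbol x-c\boldsymbol y\|_2$. $\Sigma_k=\{\boldsymbol z\in\mathbb F^n:\|\boldsymbol z\|_0\le k\}$, $\sigma_k(\boldsymbol x)_2=\min_{\boldsymbol z\in\Sigma_k}\mathrm{dist}(\boldsymbol x,\boldsymbol z)$. *)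

From HB Require Import structures.
From mathcomp Require Import all_boot all_order all_algebra.
From mathcomp Require Import classical_sets reals.
From mathcomp Require Export complex.
Set Implicit Arguments. Unset Strict Implicit. Unset Printing Implicit Defensive.
Import Order.TTheory GRing.Theory Num.Theory.
Local Open Scope ring_scope.
Local Open Scope classical_set_scope.

Section PhaseDefs.
(* F is the scalar field (R or C), modF : F -> R its modulus. *)
Variables (R : realType) (F : nzRingType) (modF : F -> R).

Definition vmod m (u : 'cV[F]_m) : 'cV[R]_m := \col_i modF (u i ord0).

Definition norm2 n (u : 'cV[F]_n) : R := Num.sqrt (\sum_i modF (u i ord0) ^+ 2).

Definition pdist n (x y : 'cV[F]_n) : R :=
  inf [set norm2 (x - c *: y) | c in [set c : F | modF c = 1]].

Definition sparse k n (z : 'cV[F]_n) : bool := (#|[pred i : 'I_n | z i ord0 != 0%R]| <= k)%N.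

Definition sigmak k n (x : 'cV[F]_n) : R :=
  inf [set pdist x z | z in [set z : 'cV[F]_n | sparse k z]].

Definition instance_optimal m n k (A : 'M[F]_(m, n)) (Delta : 'cV[R]_m -> 'cV[F]_n) (c0 : R) :=
  forall x : 'cV[F]_n, pdist (Delta (vmod (A *m x))) x <= c0 * sigmak k x.
End PhaseDefs.

From HB Require Import structures.
From mathcomp Require Import all_boot all_order all_algebra.
From mathcomp Require Import classical_sets reals.
From mathcomp Require Import complex.
From mathcomp Require Import spectral lra.
Set Implicit Arguments.
Unset Strict Implicit.
Unset Printing Implicit Defensive.

Import Order.TTheory GRing.Theory Num.Theory.
Local Open Scope ring_scope.

(** Instance optimality forces a null space property: the decoder must send
    [|A 0|] to [0], and every [h] in the kernel of [A] is measured like [0], so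
    [||h|| = dist(0, h) <= c0 sigma_k(h) <= c0 ||h - h_j e_j||], i.e.
    [c0^2 |h_j|^2 <= (c0^2 - 1) ||h||^2].  Take an orthonormal basis [U] of the
    kernel (of dimension [r >= n - m]) and the projection [h] of [e_j] onto it:
    [h_j = ||h||^2 = s_j := sum_l |U_lj|^2], so the null space property gives
    [c0^2 s_j <= c0^2 - 1] whenever [s_j > 0].  Summing over [j], with
    [sum_j s_j = r], yields [c0^2 (n - m) <= (c0^2 - 1) n], i.e. [n <= c0^2 m].
    Real matrices are handled through their complexification. *)

Definition null_space_property (R : numDomainType) (F : nzRingType) (modF : F -> R)
    m n (A : 'M[F]_(m, n)) (c0 : R) :=
  forall h : 'cV[F]_n, A *m h = 0 -> forall j,
    c0 ^+ 2 * modF (h j ord0) ^+ 2 <= (c0 ^+ 2 - 1) * \sum_i modF (h i ord0) ^+ 2.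

Section InstanceOptimality.
Variables (R : realType) (F : nzRingType) (modF : F -> R).
Hypotheses (modF0 : modF 0 = 0) (modF1 : modF 1 = 1)
  (modFM : {morph modF : x y / x * y}) (modFN : forall x, modF (- x) = modF x)
  (modF_ge0 : forall x, 0 <= modF x) (modF_eq0 : forall x, modF x = 0 -> x = 0).

Lemma norm2_ge0 n (u : 'cV[F]_n) : 0 <= norm2 modF u.
Proof. exact: sqrtr_ge0. Qed.

Lemma norm2_le0 n (u : 'cV[F]_n) : norm2 modF u <= 0 -> u = 0.
Proof.
move=> u_le0; have sum0 : \sum_i modF (u i ord0) ^+ 2 = 0.
  apply/le_anti; rewrite sumr_ge0 ?andbT => [|i _]; last exact: exprn_ge0.
  by rewrite -sqrtr_eq0 eq_le u_le0 sqrtr_ge0.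
apply/matrixP => i j; rewrite (ord1 j) mxE; apply: modF_eq0.
move/psumr_eq0P: sum0 => /(_ (fun i _ => exprn_ge0 2 (modF_ge0 _)) i isT) /eqP.
by rewrite sqrf_eq0 => /eqP.
Qed.

Lemma pdist_ge0 n (x y : 'cV[F]_n) : 0 <= pdist modF x y.
Proof.
apply: lb_le_inf; first by exists (norm2 modF (x - 1 *: y)), 1.
by move=> _ [c _ <-]; exact: norm2_ge0.
Qed.

Lemma pdist_le n (x y : 'cV[F]_n) c :
  modF c = 1 -> pdist modF x y <= norm2 modF (x - c *: y).
Proof.
move=> c_unit; apply: ge_inf; last by exists c.
by exists 0 => _ [c' _ <-]; exact: norm2_ge0.
Qed.

Lemma le_pdist n (x y : 'cV[F]_n) l :
  (forall c, modF c = 1 -> l <= norm2 modF (x - c *: y)) -> l <= pdist modF x y.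
Proof.
move=> lb; apply: lb_le_inf; first by exists (norm2 modF (x - 1 *: y)), 1.
by move=> _ [c c_unit <-]; exact: lb.
Qed.

Lemma pdistx0 n (x : 'cV[F]_n) : pdist modF x 0 = norm2 modF x.
Proof.
apply/eqP; rewrite eq_le; apply/andP; split.
  by have := pdist_le x 0 modF1; rewrite scaler0 subr0.
by apply: le_pdist => c _; rewrite scaler0 subr0.
Qed.

Lemma pdist0x n (y : 'cV[F]_n) : pdist modF 0 y = norm2 modF y.
Proof.
have norm2_unit c : modF c = 1 -> norm2 modF (0 - c *: y) = norm2 modF y.
  move=> c_unit; congr Num.sqrt; apply: eq_bigr => i _.
  by rewrite !mxE sub0r modFN modFM c_unit mul1r.
apply/eqP; rewrite eq_le; apply/andP; split.
  by rewrite -(norm2_unit 1) // pdist_le.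
by apply: le_pdist => c /norm2_unit ->.
Qed.

Lemma sparse0 k n : sparse k (0 : 'cV[F]_n).
Proof. by rewrite /sparse (@eq_card _ _ pred0) ?card0 // => i; rewrite !inE mxE eqxx. Qed.

Lemma sigmak_le_pdist k n (x z : 'cV[F]_n) :
  sparse k z -> sigmak modF k x <= pdist modF x z.
Proof.
move=> z_sparse; apply: ge_inf; last by exists z.
by exists 0 => _ [z' _ <-]; exact: pdist_ge0.
Qed.

Lemma sigmak_ge0 k n (x : 'cV[F]_n) : 0 <= sigmak modF k x.
Proof.
apply: lb_le_inf; last by move=> _ [z _ <-]; exact: pdist_ge0.
by exists (pdist modF x 0), 0; rewrite //= sparse0.
Qed.

Lemma sigmak_sparse k n (x : 'cV[F]_n) : sparse k x -> sigmak modF k x = 0.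
Proof.
move=> x_sparse; apply/eqP; rewrite eq_le sigmak_ge0 andbT.
apply: le_trans (sigmak_le_pdist x x_sparse) _.
apply: le_trans (pdist_le x x modF1) _.
by rewrite scale1r subrr /norm2 big1 ?sqrtr0 // => i _; rewrite mxE modF0 expr0n.
Qed.

Lemma sigmak_le_off_coord k n (x : 'cV[F]_n) j : (1 <= k)%N ->
  sigmak modF k x <= Num.sqrt (\sum_(i | i != j) modF (x i ord0) ^+ 2).
Proof.
move=> k_gt0; pose z := \col_i (if i == j then x i ord0 else 0).
have z_sparse : sparse k z.
  apply: (leq_trans _ k_gt0); apply: (@leq_trans #|pred1 j|); last by rewrite card1.
  apply/subset_leq_card/fintype.subsetP => i; rewrite !inE mxE.
  by case: (i == j) => //; rewrite eqxx.
apply: le_trans (sigmak_le_pdist x z_sparse) _.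
apply: le_trans (pdist_le x z modF1) _.
rewrite /norm2 (bigD1 j) //= !mxE eqxx mul1r subrr modF0 expr0n add0r.
rewrite (eq_bigr (fun i => modF (x i ord0) ^+ 2)) // => i /negbTE ij.
by rewrite !mxE ij mulr0 subr0.
Qed.

Lemma instance_optimal_decode0 m n k (A : 'M[F]_(m, n)) Delta c0 :
  instance_optimal modF k A Delta c0 -> Delta (vmod modF (A *m 0)) = 0.
Proof.
move=> opt; apply: norm2_le0; rewrite -pdistx0.
by have := opt 0; rewrite sigmak_sparse ?sparse0 // mulr0.
Qed.

Lemma instance_optimal_null_space m n k (A : 'M[F]_(m, n)) Delta c0 :
  0 < c0 -> (1 <= k)%N -> instance_optimal modF k A Delta c0 ->
  null_space_property modF A c0.
Proof.
move=> c0_gt0 k_gt0 opt h Ah0 j.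
set t := modF (h j ord0) ^+ 2; set T := \sum_(i | i != j) modF (h i ord0) ^+ 2.
have -> : \sum_i modF (h i ord0) ^+ 2 = t + T by rewrite (bigD1 j).
have T_ge0 : 0 <= T by rewrite sumr_ge0 // => i _; rewrite exprn_ge0.
have norm_le : Num.sqrt (t + T) <= c0 * Num.sqrt T.
  have := opt h; rewrite Ah0 -(mulmx0 _ A) (instance_optimal_decode0 opt) pdist0x.
  rewrite /norm2 (bigD1 j) //= => /le_trans; apply.
  by rewrite ler_pM2l // sigmak_le_off_coord.
have : t + T <= c0 ^+ 2 * T.
  have := ler_pM (sqrtr_ge0 _) (sqrtr_ge0 _) norm_le norm_le.
  by rewrite -!expr2 exprMn !sqr_sqrtr // addr_ge0 // exprn_ge0.
set c2 := c0 ^+ 2; nra.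
Qed.
End InstanceOptimality.

Section OrthonormalFrame.
Local Open Scope sesquilinear_scope.
Variable C : numClosedFieldType.

Lemma kernel_orthonormal_frame m n (A : 'M[C]_(m, n)) :
  exists r (U : 'M[C]_(r, n)), [/\ (n - m <= r)%N, U *m U ^t* = 1%:M & U *m A^T = 0].
Proof.
set K := kermx A^T; exists (\rank K), (schmidt (row_base K)); split.
- by rewrite mxrank_ker mxrank_tr leq_sub2l // rank_leq_row.
- by apply/unitarymxP; apply: schmidt_unitarymx; exact: rank_leq_col.
- apply/eqP; rewrite -sub_kermx -/K.
  by rewrite (eqmx_schmidt_free (row_base_free K)) eq_row_base.
Qed.

Variables (r n : nat) (U : 'M[C]_(r, n)).

Definition frame_weight j := \sum_l `|U l j| ^+ 2.

(* The orthogonal projection of [e_j] onto the span of the rows of [U]. *)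
Definition frame_column j : 'cV[C]_n := (\row_l (U l j)^* *m U)^T.

Lemma frame_weight_ge0 j : 0 <= frame_weight j.
Proof. by rewrite sumr_ge0 // => l _; rewrite exprn_ge0. Qed.

Lemma frame_column_ker m (A : 'M[C]_(m, n)) j :
  U *m A^T = 0 -> A *m frame_column j = 0.
Proof.
move=> UA0; rewrite /frame_column trmx_mul mulmxA -(trmxK A) -trmx_mul UA0.
by rewrite trmx0 mul0mx.
Qed.

Lemma frame_column_diag j : frame_column j j ord0 = frame_weight j.
Proof. by rewrite !mxE; apply: eq_bigr => l _; rewrite mxE mulrC normCK. Qed.

Hypothesis U_orthonormal : U *m U ^t* = 1%:M.

Lemma sum_frame_weight : \sum_j frame_weight j = r%:R.
Proof.
rewrite /frame_weight exchange_big /=.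
transitivity (\sum_(l < r) (U *m U ^t*) l l).
  by apply: eq_bigr => l _; rewrite mxE; apply: eq_bigr => i _; rewrite !mxE normCK.
rewrite U_orthonormal (eq_bigr (fun=> 1)) => [|l _]; last by rewrite mxE eqxx.
by rewrite sumr_const card_ord.
Qed.

Lemma norm2_frame_column j : \sum_i `|frame_column j i ord0| ^+ 2 = frame_weight j.
Proof.
pose w := \row_l (U l j)^* *m U.
transitivity ((w *m w ^t*) ord0 ord0).
  by rewrite [RHS]mxE; apply: eq_bigr => i _; rewrite normCK !mxE.
rewrite trmx_mul map_mxM mulmxA -(mulmxA _ U) U_orthonormal mulmx1 mxE /frame_weight.
by apply: eq_bigr => l _; rewrite !mxE /= conjCK mulrC normCK.
Qed.
End OrthonormalFrame.

Lemma sum_weights_bound (R : numDomainType) n (s : 'I_n -> R) (a b : R) r :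
  0 < a -> (0 < r)%N -> (forall j, 0 <= s j) ->
  (forall j, a * s j ^+ 2 <= b * s j) -> \sum_j s j = r%:R ->
  a * r%:R <= b * n%:R.
Proof.
move=> a_gt0 r_gt0 s_ge0 s_bound sum_s.
have pos_bound j : 0 < s j -> a * s j <= b.
  by move=> sj_gt0; rewrite -(ler_pM2r sj_gt0) mulrAC -mulrA -expr2.
have b_ge0 : 0 <= b.
  have [j sj_gt0 | s_le0] := pickP (fun j => 0 < s j).
    by apply: le_trans (pos_bound j sj_gt0); rewrite mulr_ge0 ?ltW.
  move: sum_s; rewrite big1 => [/esym/eqP|j _].
    by rewrite pnatr_eq0 => /eqP r0; rewrite r0 in r_gt0.
  by have := s_ge0 j; rewrite le0r s_le0 orbF => /eqP.
rewrite -sum_s mulr_sumr mulr_natr -[n in b *+ n]card_ord -sumr_const.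
apply: ler_sum => j _; have := s_ge0 j; rewrite le0r => /orP[/eqP-> | /pos_bound //].
by rewrite mulr0.
Qed.

Lemma kernel_coordinate_bound (C : numClosedFieldType) m n (A : 'M[C]_(m, n)) (a b : C) :
  (m < n)%N -> 0 < a ->
  (forall h : 'cV[C]_n, A *m h = 0 -> forall j,
      a * `|h j ord0| ^+ 2 <= b * \sum_i `|h i ord0| ^+ 2) ->
  a * (n - m)%:R <= b * n%:R.
Proof.
move=> mn a_gt0 nsp; have [r [U [rank_r U_orthonormal UA0]]] := kernel_orthonormal_frame A.
apply: le_trans (_ : a * r%:R <= _); first by rewrite ler_pM2l // ler_nat.
apply: sum_weights_bound a_gt0 _ (frame_weight_ge0 U) _ (sum_frame_weight U_orthonormal).
  by apply: leq_trans rank_r; rewrite subn_gt0.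
move=> j; have := nsp _ (frame_column_ker j UA0) j.
by rewrite norm2_frame_column // frame_column_diag ger0_norm // frame_weight_ge0.
Qed.

Section ComplexScalars.
Variable R : rcfType.
Local Notation normc := (@ComplexField.Normc.normc R).

Lemma normC_normc (z : R[i]) : `|z| = (normc z)%:C%C.
Proof. by case: z. Qed.

Lemma null_space_property_bound m n (A : 'M[R[i]]_(m, n)) (c0 : R) :
  0 < c0 -> (m < n)%N -> null_space_property normc A c0 ->
  (c0 ^+ 2)^-1 * n%:R <= m%:R.
Proof.
move=> c0_gt0 mn nsp; have c2_gt0 : 0 < c0 ^+ 2 by rewrite exprn_gt0.
have : (c0 ^+ 2 * (n - m)%:R)%:C%C <= ((c0 ^+ 2 - 1) * n%:R)%:C%C :> R[i].
  rewrite rmorphM [X in _ <= X]rmorphM !rmorph_nat.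
  apply: (kernel_coordinate_bound (A := A) mn) => [|h Ah0 j].
    by rewrite ltcE /= eqxx c2_gt0.
  under eq_bigr do rewrite normC_normc -rmorphXn.
  by rewrite normC_normc -!rmorphXn -rmorph_sum -!rmorphM lecR; exact: (nsp h Ah0 j).
rewrite lecR (natrB _ (ltnW mn)) => bound.
rewrite mulrC ler_pdivrMr //; set c2 := c0 ^+ 2 in bound *; nra.
Qed.

Lemma Re_realM (a : R) (z : R[i]) : complex.Re (a%:C * z)%C = a * complex.Re z.
Proof. by case: z => p q /=; rewrite mul0r subr0. Qed.

Lemma Im_realM (a : R) (z : R[i]) : complex.Im (a%:C * z)%C = a * complex.Im z.
Proof. by case: z => p q /=; rewrite mul0r addr0. Qed.

Lemma map_Re_mulmx m n p (A : 'M[R]_(m, n)) (h : 'M[R[i]]_(n, p)) :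
  map_mx (@complex.Re R) (map_mx (real_complex R) A *m h) = A *m map_mx (@complex.Re R) h.
Proof.
apply/matrixP => i l; rewrite !mxE (@raddf_sum _ _ (@complex.Re R : Rcomplex R -> R)).
by apply: eq_bigr => k _; rewrite !mxE; exact: Re_realM.
Qed.

Lemma map_Im_mulmx m n p (A : 'M[R]_(m, n)) (h : 'M[R[i]]_(n, p)) :
  map_mx (@complex.Im R) (map_mx (real_complex R) A *m h) = A *m map_mx (@complex.Im R) h.
Proof.
apply/matrixP => i l; rewrite !mxE (@raddf_sum _ _ (@complex.Im R : Rcomplex R -> R)).
by apply: eq_bigr => k _; rewrite !mxE; exact: Im_realM.
Qed.

Lemma normc_sqr (z : R[i]) : normc z ^+ 2 = `|complex.Re z| ^+ 2 + `|complex.Im z| ^+ 2.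
Proof. by case: z => p q; rewrite /= !real_normK ?num_real // sqr_sqrtr ?addr_ge0 ?sqr_ge0. Qed.

Lemma null_space_property_complexify m n (A : 'M[R]_(m, n)) (c0 : R) :
  null_space_property (fun t : R => `|t|) A c0 ->
  null_space_property normc (map_mx (real_complex R) A) c0.
Proof.
move=> nsp h Ah0 j.
have Re_ker : A *m map_mx (@complex.Re R) h = 0.
  by apply/matrixP => i l; rewrite -map_Re_mulmx Ah0 !mxE.
have Im_ker : A *m map_mx (@complex.Im R) h = 0.
  by apply/matrixP => i l; rewrite -map_Im_mulmx Ah0 !mxE.
under eq_bigr do rewrite normc_sqr.
rewrite normc_sqr big_split !mulrDr /=.
apply: lerD; [have := nsp _ Re_ker j | have := nsp _ Im_ker j];
  by rewrite mxE; under [in X in X -> _]eq_bigr do rewrite mxE.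
Qed.
End ComplexScalars.

Theorem proposition2p10 (R : realType) (c0 : R) (hc0 : 0 < c0) :
  exists c : R, 0 < c /\
    (forall (m n k : nat) (A : 'M[R]_(m, n)) (Delta : 'cV[R]_m -> 'cV[R]_n),
        (m < n)%N -> (1 <= k <= n)%N ->
        instance_optimal (fun t : R => `|t|) k A Delta c0 ->
        c * n%:R <= m%:R) /\
    (forall (m n k : nat) (A : 'M[R[i]]_(m, n)) (Delta : 'cV[R]_m -> 'cV[R[i]]_n),
        (m < n)%N -> (1 <= k <= n)%N ->
        instance_optimal (@ComplexField.Normc.normc R) k A Delta c0 ->
        c * n%:R <= m%:R).
Proof.
exists (c0 ^+ 2)^-1; split; first by rewrite invr_gt0 exprn_gt0.
split=> m n k A Delta mn /andP[k_gt0 _] opt; apply: (null_space_property_bound hc0 mn).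
- apply/null_space_property_complexify/(instance_optimal_null_space _ _ _ _ _ _ hc0 k_gt0 opt).
  + exact: normr0.
  + exact: normr1.
  + exact: normrM.
  + exact: normrN.
  + exact: normr_ge0.
  + exact: normr0_eq0.
- apply: (instance_optimal_null_space _ _ _ _ _ _ hc0 k_gt0 opt).
  + exact: ComplexField.Normc.normc0.
  + exact: ComplexField.Normc.normc1.
  + exact: ComplexField.Normc.normcM.
  + exact: normcN.
  + by case=> p q; exact: sqrtr_ge0.
  + exact: ComplexField.Normc.eq0_normc.
Qed.
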